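(* Let $D\in\mathbb{Z}_{\le0}$ and let $d\ge1$ be an integer coprime to $D$. Then for every $s\in\mathbb{Z}^n$ with $D\equiv\frac12qS^{-1}[s]\pmod{qd}$, the vector $$\xi=\left(\frac{\frac12qS^{-1}[s]-D}{qd},\ S^{-1}s,\ d\right)^t\in\mathbb{Q}^{n+2}$$ belongs to $L_0\!\left[-\frac Dq,\frac12\mathbb{Z}\right]$, i.e. $\phi_0[\xi]=-\frac Dq$ and $\{\phi_0(\xi,y):y\in\mathbb{Z}^{n+2}\}=\frac12\mathbb{Z}$.
   Context: $S$ is an even positive definite symmetric integral $n\times n$ matrix ($n\ge1$), $A[B]=B^tAB$, and $q$ is the least positive integer with $\frac12qS^{-1}[r]\in\mathbb{Z}$ for all $r\in\mathbb{Z}^n$. $S_0=\begin{pmatrix}0&0&1\\0&-S&0\\1&0&0\end{pmatrix}$, $\phi_0(x,y)=\frac12x^tS_0y$ on $V_0=\mathbb{Q}^{n+2}$, $\phi_0[x]=\phi_0(x,x)$, $L_0=\mathbb{Z}^{n+2}$. For $c\in\mathbb{Q}^\times$ and a fractional ideal $\mathfrak b$ of $\mathbb{Q}$, $L_0[c,\mathfrak b]=\{x\in V_0:\phi_0[x]=c,\ \phi_0(x,L_0)=\mathfrak b\}$, where $\phi_0(x,L_0)$ is the set (a fractional ideal) $\{\phi_0(x,y):y\in L_0\}$. *)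

From HB Require Import structures.
From mathcomp Require Import all_boot all_order all_algebra.
Set Implicit Arguments. Unset Strict Implicit. Unset Printing Implicit Defensive.
Import Order.TTheory GRing.Theory Num.Theory.
Local Open Scope ring_scope.

(* A[B] = B^t A B, for a column vector B, as a scalar *)
Definition qform (m : nat) (A : 'M[rat]_m) (r : 'cV[rat]_m) : rat :=
  (r^T *m A *m r) 0 0.

Definition intvec (m : nat) (r : 'cV[rat]_m) : Prop :=
  forall i, r i 0 \is a Num.int.

Definition even_posdef_sym_int (n : nat) (S : 'M[rat]_n) : Prop :=
  [/\ forall i j, S i j \is a Num.int,
      S^T = S,
      forall i, S i i / 2 \is a Num.int &
      forall v : 'cV[rat]_n, v != 0 -> 0 < qform S v].

Definition q_prop (n : nat) (S : 'M[rat]_n) (q : nat) : Prop :=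
  forall r : 'cV[rat]_n, intvec r -> (q%:R / 2) * qform (invmx S) r \is a Num.int.

Definition is_level (n : nat) (S : 'M[rat]_n) (q : nat) : Prop :=
  [/\ (0 < q)%N, q_prop S q & forall q', (0 < q')%N -> q_prop S q' -> (q <= q')%N].

(* S_0 = [[0,0,1],[0,-S,0],[1,0,0]] in block form with sizes 1, n, 1 *)
Definition S0 (n : nat) (S : 'M[rat]_n) : 'M[rat]_(1 + n + 1) :=
  block_mx (block_mx (0 : 'M_1) 0 0 (- S))
           (col_mx (1%:M : 'M_1) (0 : 'M_(n, 1)))
           (row_mx (1%:M : 'M_1) (0 : 'M_(1, n)))
           (0 : 'M_1).

Definition phi0 (n : nat) (S : 'M[rat]_n) (x y : 'cV[rat]_(1 + n + 1)) : rat :=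
  (1 / 2) * (x^T *m S0 S *m y) 0 0.

(* x in L_0[c, b], where the fractional ideal b is given as a predicate on Q *)
Definition in_L0 (n : nat) (S : 'M[rat]_n) (c : rat) (b : rat -> Prop)
    (x : 'cV[rat]_(1 + n + 1)) : Prop :=
  phi0 S x x = c /\
  (forall r : rat, (exists y, intvec y /\ phi0 S x y = r) <-> b r).

Definition halfZ (r : rat) : Prop := exists k : int, r = k%:~R / 2.

Definition xi_vec (n : nat) (S : 'M[rat]_n) (q d : nat) (D : int)
    (s : 'cV[rat]_n) : 'cV[rat]_(1 + n + 1) :=
  col_mx (col_mx (((q%:R / 2) * qform (invmx S) s - D%:~R) / (q * d)%:R)%:M
                 (invmx S *m s))
         (d%:R)%:M.

(* Since S is symmetric, (S^-1 s)^t S y = s^t y, so twice phi_0(xi, y) equals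
   a y_(n+2) - s^t y' + d y_1, where a = ((q/2) S^-1[s] - D)/(qd) is an integer by
   the congruence.  Hence phi_0[xi] = a d - S^-1[s]/2 = -D/q, and phi_0(xi, L_0) is
   half the ideal generated by a, d and the entries of s.  Because (q/2) S^-1 is an
   integral quadratic form, there is an integral c with s^t c = (q/2) S^-1[s], so
   the ideal contains D = s^t c - a q d as well as d; these are coprime. *)

From HB Require Import structures.
From mathcomp Require Import all_boot all_order all_algebra ring.
Set Implicit Arguments.
Unset Strict Implicit.
Unset Printing Implicit Defensive.

Import Order.TTheory GRing.Theory Num.Theory.
Local Open Scope ring_scope.

Section IntegralVectors.

Variable m : nat.
Implicit Types r c : 'cV[rat]_m.

Lemma intvec_delta (i : 'I_m) : intvec (delta_mx i 0).
Proof. by move=> j; rewrite mxE; case: (_ && _). Qed.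

Lemma intvecD r c : intvec r -> intvec c -> intvec (r + c).
Proof. by move=> rint cint i; rewrite mxE rpredD. Qed.

Lemma intvecZ (a : rat) r : a \is a Num.int -> intvec r -> intvec (a *: r).
Proof. by move=> aint rint i; rewrite mxE rpredM. Qed.

Lemma intvec_mulmx p (M : 'M[rat]_(p, m)) r :
  (forall i j, M i j \is a Num.int) -> intvec r -> intvec (M *m r).
Proof.
by move=> Mint rint i; rewrite mxE rpred_sum // => j _; rewrite rpredM.
Qed.

Lemma int_dotmx r c : intvec r -> intvec c -> (r^T *m c) 0 0 \is a Num.int.
Proof.
move=> rint cint; have rTint i j : r^T i j \is a Num.int by rewrite mxE (ord1 i).
exact: intvec_mulmx rTint cint 0.
Qed.

End IntegralVectors.

Lemma intvec_col_mx m1 m2 (r : 'cV[rat]_m1) (c : 'cV[rat]_m2) :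
  intvec r -> intvec c -> intvec (col_mx r c).
Proof. by move=> rint cint i; rewrite mxE; case: split_ordP => j _. Qed.

Lemma intvec_usubmx m1 m2 (r : 'cV[rat]_(m1 + m2)) : intvec r -> intvec (usubmx r).
Proof. by move=> rint i; rewrite mxE. Qed.

Lemma intvec_dsubmx m1 m2 (r : 'cV[rat]_(m1 + m2)) : intvec r -> intvec (dsubmx r).
Proof. by move=> rint i; rewrite mxE. Qed.

Lemma intvec_scalar_mx (a : rat) : a \is a Num.int -> intvec (a%:M : 'cV_1).
Proof. by move=> aint i; rewrite (ord1 i) mxE mulr1n. Qed.

Lemma scalar_mx11 (a : rat) : (a%:M : 'M_1) 0 0 = a.
Proof. by rewrite mxE mulr1n. Qed.

Definition integral_qform m (A : 'M[rat]_m) : Prop :=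
  forall r, intvec r -> qform A r \is a Num.int.

Section QuadraticForms.

Variable m : nat.
Implicit Types (A N : 'M[rat]_m) (r : 'cV[rat]_m).

Lemma qformD A N r : qform (A + N) r = qform A r + qform N r.
Proof. by rewrite /qform mulmxDr mulmxDl mxE. Qed.

Lemma qformZ a A r : qform (a *: A) r = a * qform A r.
Proof. by rewrite /qform -scalemxAr -scalemxAl mxE. Qed.

Lemma mulmx_delta A i j :
  ((delta_mx i 0 : 'cV_m)^T *m A *m (delta_mx j 0 : 'cV_m)) 0 0 = A i j.
Proof. by rewrite trmx_delta -rowE -colE !mxE. Qed.

Lemma qform_delta A i : qform A (delta_mx i 0) = A i i.
Proof. exact: mulmx_delta. Qed.

Lemma qform_trmx A r : qform A^T r = qform A r.
Proof.
transitivity ((r^T *m A *m r)^T 0 0); last by rewrite mxE.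
by rewrite !trmx_mul trmxK mulmxA.
Qed.

Lemma qform_antisym A r : A^T = - A -> qform A r = 0.
Proof.
move=> A_antisym; apply/eqP.
suff : qform A r *+ 2 == 0 by rewrite mulrn_eq0.
rewrite mulr2n addr_eq0 -{1}qform_trmx A_antisym.
by rewrite /qform mulmxN mulNmx mxE.
Qed.

Lemma qformDr A u v : qform A (u + v) =
  qform A u + qform A v + ((u^T *m A *m v) 0 0 + (v^T *m A *m u) 0 0).
Proof.
by rewrite /qform mulmxDr [(u + v)^T]linearD /= !mulmxDl !mxE; ring.
Qed.

Lemma integral_qform_diag A i : integral_qform A -> A i i \is a Num.int.
Proof. by move=> Aint; rewrite -qform_delta; apply: Aint; apply: intvec_delta. Qed.

Lemma integral_qform_double A i j :
  A^T = A -> integral_qform A -> A i j *+ 2 \is a Num.int.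
Proof.
move=> Asym Aint; have := Aint _ (intvecD (intvec_delta i) (intvec_delta j)).
have Aji : A j i = A i j by rewrite -{2}Asym mxE.
rewrite qformDr !qform_delta !mulmx_delta Aji -mulr2n.
by rewrite rpredDl // rpredD // integral_qform_diag.
Qed.

Lemma integral_qform_dotmx A r : A^T = A -> integral_qform A -> intvec r ->
  exists2 c, intvec c & (r^T *m c) 0 0 = qform A r.
Proof.
(* A + N is lower triangular with entries A i i and 2 A i j, and the
   antisymmetric N does not change the quadratic form. *)
move=> Asym Aint rint.
have Aji i j : A j i = A i j by rewrite -{2}Asym mxE.
pose N := \matrix_(i, j) if (j < i)%N then A i j else if (i < j)%N then - A i j else 0.
have N_antisym : N^T = - N.
  by apply/matrixP=> i j; rewrite !mxE Aji; case: ltngtP; rewrite ?opprK ?oppr0.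
exists ((A + N) *m r).
  apply: intvec_mulmx rint => i j; rewrite !mxE.
  case: ltngtP => [_ | _ | /val_inj ->]; rewrite ?subrr ?addr0 ?integral_qform_diag //.
  by rewrite -mulr2n integral_qform_double.
rewrite mulmxA -[LHS]/(qform (A + N) r) qformD.
by rewrite (qform_antisym _ N_antisym) addr0.
Qed.

End QuadraticForms.

Lemma posdef_unitmx n (S : 'M[rat]_n) :
  (forall v, v != 0 -> 0 < qform S v) -> S \in unitmx.
Proof.
move=> Spos; rewrite unitmxE unitfE; apply/negP => /det0P [v v_neq0 vS].
have := Spos v^T; rewrite trmx_eq0 => /(_ v_neq0).
by rewrite /qform trmxK vS mul0mx mxE ltxx.
Qed.

Section Phi0.

Variables (n : nat) (S : 'M[rat]_n).

Lemma phi0_col_mx (a b : rat) (xm ym : 'cV[rat]_n) (y1 y3 : 'cV[rat]_1) :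
  phi0 S (col_mx (col_mx a%:M xm) b%:M) (col_mx (col_mx y1 ym) y3) =
  1 / 2 * (a * y3 0 0 - (xm^T *m S *m ym) 0 0 + b * y1 0 0).
Proof.
rewrite /phi0 /S0 !tr_col_mx !tr_scalar_mx !mul_row_block !mul_row_col.
rewrite !mulmx0 !addr0 mul_mx_row mulmx0 add_row_mx mul_row_col.
rewrite !mulmx1 !addr0 !add0r mulmxN mulNmx !mul_scalar_mx.
by rewrite !mxE; ring.
Qed.

Lemma phi0Zr x y (a : rat) : phi0 S x (a *: y) = a * phi0 S x y.
Proof. by rewrite /phi0 -scalemxAr mxE mulrCA. Qed.

Lemma phi0_values_halfZ x :
    (forall y, intvec y -> 2 * phi0 S x y \is a Num.int) ->
    (exists2 y, intvec y & phi0 S x y = 1 / 2) ->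
  forall r, (exists y, intvec y /\ phi0 S x y = r) <-> halfZ r.
Proof.
move=> phi0_int [y0 y0_int phi0_y0] r; split.
  move=> [y [y_int <-]]; have /intrP [k Ek] := phi0_int y y_int.
  by exists k; rewrite -Ek mulrC mulKf.
move=> [k ->]; exists (k%:~R *: y0); split; last by rewrite phi0Zr phi0_y0 mul1r.
by apply: intvecZ; rewrite ?intr_int.
Qed.

Hypotheses (Ssym : S^T = S) (S_unit : S \in unitmx).

Lemma trmx_invmx_mulmx (s : 'cV[rat]_n) : (invmx S *m s)^T *m S = s^T.
Proof. by rewrite trmx_mul trmx_inv Ssym -mulmxA mulVmx // mulmx1. Qed.

Lemma phi0_invmx_col_mx (a b : rat) (s ym : 'cV[rat]_n) (y1 y3 : 'cV[rat]_1) :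
  phi0 S (col_mx (col_mx a%:M (invmx S *m s)) b%:M) (col_mx (col_mx y1 ym) y3) =
  1 / 2 * (a * y3 0 0 - (s^T *m ym) 0 0 + b * y1 0 0).
Proof. by rewrite phi0_col_mx trmx_invmx_mulmx. Qed.

Lemma phi0_invmx_self (a b : rat) (s : 'cV[rat]_n) :
  let x := col_mx (col_mx a%:M (invmx S *m s)) b%:M in
  phi0 S x x = a * b - qform (invmx S) s / 2.
Proof.
by rewrite /= phi0_invmx_col_mx !scalar_mx11 mulmxA -/(qform _ _); field.
Qed.

Lemma phi0_invmx_values_halfZ (a b : rat) (s : 'cV[rat]_n) :
    a \is a Num.int -> b \is a Num.int -> intvec s ->
    (exists u v c, [/\ u \is a Num.int, v \is a Num.int, intvec c &
                       a * v - (s^T *m c) 0 0 + b * u = 1]) ->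
  let x := col_mx (col_mx a%:M (invmx S *m s)) b%:M in
  forall r, (exists y, intvec y /\ phi0 S x y = r) <-> halfZ r.
Proof.
move=> a_int b_int s_int [u [v [c [u_int v_int c_int Euvc]]]] x.
apply: phi0_values_halfZ => [y y_int|].
  rewrite -(vsubmxK y) -(vsubmxK (usubmx y)) phi0_invmx_col_mx mul1r mulVKf //.
  have y1_int := intvec_usubmx (intvec_usubmx y_int).
  have ym_int := intvec_dsubmx (intvec_usubmx y_int).
  have y3_int := intvec_dsubmx y_int.
  by rewrite rpredD ?rpredB ?rpredM ?int_dotmx ?y1_int ?y3_int.
exists (col_mx (col_mx u%:M c) v%:M).
  apply: intvec_col_mx; last exact: intvec_scalar_mx.
  by apply: intvec_col_mx; first exact: intvec_scalar_mx.
by rewrite phi0_invmx_col_mx !scalar_mx11 Euvc.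
Qed.

End Phi0.

Theorem lemma6p7 (n : nat) (S : 'M[rat]_n) (q : nat) (D : int) (d : nat)
    (s : 'cV[rat]_n) :
  (0 < n)%N ->
  even_posdef_sym_int S ->
  is_level S q ->
  D <= 0 ->
  (0 < d)%N ->
  coprime d `|D|%N ->
  intvec s ->
  (exists k : int, (q%:R / 2) * qform (invmx S) s - D%:~R = k%:~R * (q * d)%:R) ->
  in_L0 S (- (D%:~R / q%:R)) halfZ (xi_vec S q d D s).
Proof.
move=> _ [_ Ssym _ Spos] [q_gt0 qP _] _ d_gt0 coprime_dD s_int [k Ek].
have S_unit := posdef_unitmx Spos.
have q_neq0 : (q%:R : rat) != 0 by rewrite pnatr_eq0 -lt0n.
have d_neq0 : (d%:R : rat) != 0 by rewrite pnatr_eq0 -lt0n.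
have ED : D%:~R = q%:R / 2 * qform (invmx S) s - k%:~R * (q%:R * d%:R) :> rat.
  by rewrite -natrM -Ek opprB addrC subrK.
rewrite /in_L0 /xi_vec Ek mulfK ?natrM ?mulf_neq0 //; split.
  by rewrite phi0_invmx_self // ED; field.
have [c c_int Esc] : exists2 c, intvec c & (s^T *m c) 0 0 = q%:R / 2 * qform (invmx S) s.
  rewrite -qformZ; apply: integral_qform_dotmx => // [|r r_int].
    by rewrite linearZ /= trmx_inv Ssym.
  by rewrite qformZ qP.
have [u [w Euw]] := Bezoutz d D.
have {}Euw : u%:~R * d%:R + w%:~R * D%:~R = 1 :> rat.
  move: Euw; rewrite /gcdz absz_nat (eqP coprime_dD) => /(congr1 (intr : int -> rat)).
  by rewrite intrD !intrM.
apply: phi0_invmx_values_halfZ; rewrite ?intr_int ?natr_int //.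
exists u%:~R, (- (w%:~R * (q%:R * d%:R))), (- w%:~R *: c).
split; rewrite ?rpredN ?rpredM ?intr_int ?natr_int //.
  by apply: intvecZ; rewrite ?rpredN ?intr_int.
by rewrite -scalemxAr mxE Esc -[RHS]Euw ED; ring.
Qed.
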